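(* Let $q$ be a prime power, $b,k,t$ positive integers with $b\le k$, $a\in\mathbb{F}_q$ nonzero, and $\boldsymbol{x}_i=(a^i0^{k-i})\in\mathbb{F}_q^k$ (the first $i$ coordinates equal to $a$, the rest $0$) for $i\in\{0,1,\ldots,k-b+1\}$. Then \[ r_b^{wt_b}(k,t)\ge N_b\big(\boldsymbol{B}^{(1)}_{wt_b}(t,\boldsymbol{x}_0,\ldots,\boldsymbol{x}_{k-b+1})\big), \] where this $(k-b+2)\times(k-b+2)$ matrix (rows/columns indexed by $0,\ldots,k-b+1$) has entries $0$ for $i=j$ and $[2t-2b+3-|i-j|]^+$ for $i\ne j$.
   Context: For $\boldsymbol{z}=(z_0,\ldots,z_{n-1}),\boldsymbol{w}\in\mathbb{F}_q^n$, $d_b(\boldsymbol{z},\boldsymbol{w})$ is the number of $i\in\{0,\ldots,n-1\}$ with $(z_i,\ldots,z_{i+b-1})\ne(w_i,\ldots,w_{i+b-1})$ (indices mod $n$), and $wt_b(\boldsymbol{x})=d_b(\boldsymbol{x},\boldsymbol{0})$ is the $b$-symbol weight function on $\mathbb{F}_q^k$. $[x]^+=\max\{x,0\}$. A systematic encoding $\mathrm{Enc}(\boldsymbol{x})=(\boldsymbol{x},p(\boldsymbol{x}))\in\mathbb{F}_q^{k+r}$ is a function-correcting $b$-symbol code for $f$ if $d_b(\mathrm{Enc}(\boldsymbol{x}_1),\mathrm{Enc}(\boldsymbol{x}_2))\ge 2t+1$ whenever $f(\boldsymbol{x}_1)\ne f(\boldsymbol{x}_2)$; $r_b^f(k,t)$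 is the smallest $r$ for which one exists. For an $M\times M$ nonnegative integer matrix $\boldsymbol{B}$, $N_b(\boldsymbol{B})$ is the smallest $r$ such that there exist $\boldsymbol{p}_1,\ldots,\boldsymbol{p}_M\in\mathbb{F}_q^r$ (in some ordering) with $d_b(\boldsymbol{p}_i,\boldsymbol{p}_j)\ge[\boldsymbol{B}]_{ij}$ for all $i,j$. *)

From mathcomp Require Import all_boot all_order all_algebra.
Set Implicit Arguments. Unset Strict Implicit. Unset Printing Implicit Defensive.
Import GRing.Theory.
Local Open Scope ring_scope.

Definition coordm (F : finFieldType) (n : nat) (z : 'rV[F]_n) (m : nat) : F :=
  match @insub nat (fun j => j < n)%N _ (m %% n)%N with
  | Some j => z ord0 j
  | None => 0
  end.

Definition dsym (F : finFieldType) (b n : nat) (z w : 'rV[F]_n) : nat :=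
  #|[set i : 'I_n | [exists s : 'I_b, coordm z (i + s)%N != coordm w (i + s)%N]]|.

Definition wtsym (F : finFieldType) (b n : nat) (x : 'rV[F]_n) : nat :=
  dsym b x 0.

(* p : F^k -> F^r defines a function-correcting b-symbol code for f
   (systematic encoding Enc(x) = (x, p(x)) in F^(k+r)) *)
Definition is_fcbsc (F : finFieldType) (T : eqType) (b k r t : nat)
  (f : 'rV[F]_k -> T) (p : 'rV[F]_k -> 'rV[F]_r) : Prop :=
  forall x1 x2 : 'rV[F]_k, f x1 != f x2 ->
    (2 * t + 1 <= dsym b (row_mx x1 (p x1)) (row_mx x2 (p x2)))%N.

(* "r_b^f(k,t) >= N" : every redundancy r admitting an FCC is >= N *)
Definition Nb_feasible (F : finFieldType) (b M r : nat) (B : 'I_M -> 'I_M -> nat) : Prop :=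
  exists P : 'I_M -> 'rV[F]_r, forall i j : 'I_M, (B i j <= dsym b (P i) (P j))%N.

Definition Bmat1 (b k t : nat) (i j : 'I_(k - b + 2)) : nat :=
  if i == j then 0%N else ((2 * t + 3) - (2 * b + ((i - j) + (j - i))))%N.

From mathcomp Require Import all_boot all_order all_algebra.
From mathcomp Require Import zify.

Set Implicit Arguments.
Unset Strict Implicit.
Unset Printing Implicit Defensive.

(* The words x_i = a^i 0^(k-i), 0 <= i <= k-b+1, have pairwise distinct
   b-symbol weights, so the encodings (x_i, p x_i) of any function-correcting
   code for wt_b are at b-symbol distance >= 2t+1.  As x_i and x_j differ
   exactly on [min i j, max i j), a differing window of the encodings either
   meets that block (|i-j| + b-1 windows), or straddles the boundary between
   x and p (b-1 windows), or is a differing window of p x_i and p x_j.  Hence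
   d_b(p x_i, p x_j) >= 2t+1 - |i-j| - 2(b-1), which is the entry of B. *)

Lemma card_ord_le_size n (A : {pred 'I_n}) (s : seq nat) :
  {in A, forall i, val i \in s} -> #|A| <= size s.
Proof.
move=> As; rewrite cardE -(size_map val).
apply: (uniq_leq_size (s1 := map val (enum A))).
  by rewrite (map_inj_uniq val_inj) enum_uniq.
by move=> x /mapP [i]; rewrite mem_enum => iA ->; apply: As.
Qed.

Section Windows.
Variable F : finFieldType.

Lemma coordm_ord n (z : 'rV[F]_n) (j : 'I_n) : coordm z j = z ord0 j.
Proof. by rewrite /coordm modn_small // valK. Qed.

Lemma coordm_lt n (z : 'rV[F]_n) j (lt_jn : j < n) :
  coordm z j = z ord0 (Ordinal lt_jn).
Proof. exact: coordm_ord z (Ordinal lt_jn). Qed.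

Arguments coordm_lt {n z j}.

Lemma coordm_mod n (z : 'rV[F]_n) m : coordm z m = coordm z (m %% n).
Proof. by rewrite /coordm modn_mod. Qed.

Lemma coordmE n (z : 'rV[F]_n) m (n_gt0 : 0 < n) :
  coordm z m = z ord0 (Ordinal (ltn_pmod m n_gt0)).
Proof. by rewrite coordm_mod (coordm_lt (ltn_pmod m n_gt0)). Qed.

Lemma row_mx_coordm k r (x : 'rV[F]_k) (p : 'rV[F]_r) (j : 'I_(k + r)) :
  row_mx x p ord0 j = if j < k then coordm x j else coordm p (j - k).
Proof.
case: splitP => [j1|j2] eq_j.
  have -> : j = lshift r j1 by apply: val_inj.
  by rewrite row_mxEl coordm_ord.
have -> : j = rshift k j2 by apply: val_inj.
by rewrite row_mxEr /= addKn coordm_ord.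
Qed.

Definition diff_windows b n (z w : 'rV[F]_n) : {set 'I_n} :=
  [set i : 'I_n | [exists s : 'I_b, coordm z (i + s) != coordm w (i + s)]].

Lemma dsymE b n (z w : 'rV[F]_n) : dsym b z w = #|diff_windows b z w|.
Proof. by []. Qed.

Lemma dsym_row_mx_le b k r (x1 x2 : 'rV[F]_k) (p1 p2 : 'rV[F]_r) m M :
  0 < b -> b <= k ->
  (forall j : 'I_k, x1 ord0 j != x2 ord0 j -> m <= j < M) ->
  dsym b (row_mx x1 p1) (row_mx x2 p2) <= (M - m) + 2 * b.-1 + dsym b p1 p2.
Proof.
move=> b_gt0 le_bk x_diff; set n := k + r.
have n_gt0 : 0 < n by rewrite /n; lia.
set Dp := diff_windows b p1 p2.
set lo := m - b.-1; set lo' := n + m - b.-1.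
(* the first two ranges are the windows meeting [m, M), directly or wrapping
   around from the end of the word *)
have cover : {in diff_windows b (row_mx x1 p1) (row_mx x2 p2), forall i,
    val i \in iota lo (M - lo) ++ iota lo' (n - lo') ++ iota (k - b.-1) b.-1
              ++ [seq k + val j | j <- enum Dp]}.
  move=> i; rewrite inE => /existsP [s].
  have lt_in := ltn_ord i; have lt_sb := ltn_ord s.
  rewrite !(coordmE _ _ n_gt0) !row_mx_coordm /= !mem_cat !mem_iota.
  have [lt_is_n|le_n_is] := ltnP (i + s) n; last first.
    have -> : (i + s) %% n = i + s - n.
      by rewrite -{1}(subnK le_n_is) modnDr modn_small; lia.
    case: ltnP => [lt_k|]; last by lia.
    by rewrite !(coordm_lt lt_k) => /x_diff /=; lia.
  rewrite modn_small //; case: ltnP => [lt_k|le_k] diff.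
    by move: diff; rewrite !(coordm_lt lt_k) => /x_diff /=; lia.
  case: (ltnP i k) => [|le_ki]; first by lia.
  have lt_ir : i - k < r by lia.
  apply/orP; right; apply/orP; right; apply/orP; right.
  apply/mapP; exists (Ordinal lt_ir); last by rewrite /= subnKC.
  rewrite mem_enum inE; apply/existsP; exists s; move: diff => /=.
  have lt_r : i - k + s < r by lia.
  by rewrite (_ : i + s - k = i - k + s) ?(coordm_lt lt_r) //; lia.
rewrite dsymE; apply: leq_trans (card_ord_le_size cover) _.
by rewrite !size_cat !size_iota size_map -cardE -dsymE; lia.
Qed.

Definition prefix_row k (a : F) i : 'rV[F]_k :=
  \row_(j < k) if j < i then a else 0%R.

Lemma prefix_row_diff k a i j (l : 'I_k) :
  prefix_row k a i ord0 l != prefix_row k a j ord0 l -> minn i j <= l < maxn i j.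
Proof.
by rewrite !mxE; case: (ltnP l i); case: (ltnP l j); rewrite ?eqxx //; lia.
Qed.

Lemma wtsym_prefix_row_lt b k a i j : 0 < b -> b <= k -> a != 0%R -> i < j ->
  j <= k - b + 1 -> wtsym b (prefix_row k a i) < wtsym b (prefix_row k a j).
Proof.
move=> b_gt0 le_bk a_neq0 lt_ij le_j; have k_gt0 : 0 < k by lia.
have coord_prefix l m :
    coordm (prefix_row k a l) m = if m %% k < l then a else 0%R.
  by rewrite coordmE mxE.
have coord0 m : coordm (0 : 'rV[F]_k) m = 0%R by rewrite coordmE mxE.
rewrite /wtsym !dsymE /diff_windows; apply: proper_card; apply/properP; split.
  apply/subsetP => w; rewrite !inE => /existsP [s diff]; apply/existsP; exists s.
  move: diff; rewrite !coord_prefix !coord0.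
  by case: ifP => [lt_i _|_]; [rewrite ifT //; lia|rewrite eqxx].
(* window j.-1 ends on the last a of x_j but lies inside the zero tail of x_i *)
have lt_jk : j.-1 < k by lia.
exists (Ordinal lt_jk); rewrite !inE.
  apply/existsP; exists (Ordinal b_gt0).
  by rewrite coord_prefix coord0 /= addn0 modn_small // ifT //; lia.
apply/existsP => -[s]; rewrite coord_prefix coord0 /=.
have lt_sb := ltn_ord s.
by rewrite modn_small; [rewrite ifF ?eqxx //; lia|lia].
Qed.

Lemma wtsym_prefix_row_neq b k a i j : 0 < b -> b <= k -> a != 0%R -> i != j ->
  i <= k - b + 1 -> j <= k - b + 1 ->
  wtsym b (prefix_row k a i) != wtsym b (prefix_row k a j).
Proof.
move=> b_gt0 le_bk a_neq0 neq_ij le_i le_j; rewrite neq_ltn.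
case: (ltngtP i j) neq_ij => [lt_ij|lt_ji|-> /eqP //] _.
  by rewrite (wtsym_prefix_row_lt b_gt0 le_bk a_neq0 lt_ij le_j).
by rewrite (wtsym_prefix_row_lt b_gt0 le_bk a_neq0 lt_ji le_i) orbT.
Qed.

End Windows.

Theorem lemma6p2 (F : finFieldType) (b k t : nat) (a : F) :
  (0 < b)%N -> (b <= k)%N -> (0 < t)%N -> (a != 0)%R ->
  forall r : nat,
    (exists p : 'rV[F]_k -> 'rV[F]_r, is_fcbsc b t (@wtsym F b k) p) ->
    exists r' : nat, (r' <= r)%N /\ Nb_feasible F b r' (@Bmat1 b k t).
Proof.
move=> b_gt0 le_bk _ a_neq0 r [p fcc]; exists r; split => //.
exists (fun i : 'I_(k - b + 2) => p (prefix_row k a i)) => i j.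
rewrite /Bmat1; case: eqVneq => [//|neq_ij].
have le_i : i <= k - b + 1 by have := ltn_ord i; lia.
have le_j : j <= k - b + 1 by have := ltn_ord j; lia.
have neq_wt :=
  @wtsym_prefix_row_neq _ b k a i j b_gt0 le_bk a_neq0 neq_ij le_i le_j.
have := dsym_row_mx_le (p (prefix_row k a i)) (p (prefix_row k a j)) b_gt0 le_bk
  (@prefix_row_diff _ k a i j).
have := fcc _ _ neq_wt; lia.
Qed.
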